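(* Let $\mathbb{F}_q$ be a finite field and $n\geq 1$. Fix any $P_0\in\mathbb{P}^n(\mathbb{F}_q)$ and $P_1,P_2\in\mathbb{P}^1(\mathbb{F}_q)$ with $P_1\neq P_2$. Then there exists a rational map $h\colon \mathbb{P}^n\dashrightarrow\mathbb{P}^1$ defined over $\mathbb{F}_q$ such that $h(P_0)=P_1$ and $h(P)=P_2$ for all $P\in\mathbb{P}^n(\mathbb{F}_q)\setminus\{P_0\}$ (in particular $h$ is defined at every point of $\mathbb{P}^n(\mathbb{F}_q)$). *)

From HB Require Import structures.
From mathcomp Require Import all_boot all_order all_algebra all_field.
From mathcomp Require Import mpoly.
Set Implicit Arguments. Unset Strict Implicit. Unset Printing Implicit Defensive.
Import GRing.Theory.
Local Open Scope ring_scope.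

(* Points of P^k(F) are represented by nonzero coordinate vectors
   x : 'I_k.+1 -> F (homogeneous coordinates); two vectors represent the
   same point iff they are proportional by a nonzero scalar. *)
Definition nonzero_vec (F : fieldType) (k : nat) (x : 'I_k -> F) : Prop :=
  exists i, x i != 0.

Definition proj_eq (F : fieldType) (k : nat) (x y : 'I_k -> F) : Prop :=
  exists c : F, c != 0 /\ forall i, y i = c * x i.

(* A rational map P^n --> P^1 over F is given by two homogeneous
   polynomials h 0, h 1 in n+1 variables of a common degree d, not both 0.
   Its value at a point x (where defined) is the point [h 0 (x) : h 1 (x)]. *)
Definition rat_map_P1 (F : fieldType) (n : nat) (h : 'I_2 -> {mpoly F[n.+1]}) :
    Prop :=
  (exists d : nat, forall i, h i \is d.-homog) /\ (exists i, h i != 0).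

Definition eval_map (F : fieldType) (n : nat) (h : 'I_2 -> {mpoly F[n.+1]})
    (x : 'I_n.+1 -> F) : 'I_2 -> F :=
  fun i => (h i).@[x].

From HB Require Import structures.
From mathcomp Require Import all_boot all_order all_algebra all_field.
From mathcomp Require Import mpoly.
Set Implicit Arguments. Unset Strict Implicit. Unset Printing Implicit Defensive.
Import GRing.Theory.
Local Open Scope ring_scope.

(* Over F_q, x ^ (q - 1) is 1 if x != 0 and 0 otherwise, so polynomials in
   the X_i ^ (q - 1) evaluate to Boolean combinations of the conditions
   x_i != 0.  This gives two forms of degree (q - 1)(n + 1): one equal to 1 at
   every nonzero vector (its i-th summand says "x_i is the first nonzero
   coordinate"), and, for P0_j != 0, one equal to 1 on the line of P0 and to 0
   at every other nonzero vector (its i-th factor says "x_j != 0 and the minor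
   P0_j x_i - P0_i x_j vanishes").  The combination with coefficients P1 - P2
   and P2 takes the value P1 on the line of P0 and P2 elsewhere. *)

Lemma expf_card_pred (F : finFieldType) (x : F) : x ^+ #|F|.-1 = (x != 0)%:R.
Proof.
have q_gt1 := finNzRing_gt1 F.
have [->|nz_x] := eqVneq x 0; first by rewrite expr0n -(subnKC q_gt1).
by apply: (mulfI nz_x); rewrite -exprS (ltn_predK q_gt1) expf_card mulr1.
Qed.

Lemma prodr_natr_bool (R : comNzRingType) (I : finType) (c : I -> bool) :
  \prod_i (c i)%:R = [forall i, c i]%:R :> R.
Proof.
case: (boolP [forall i, c i]) => [/forallP all_c | /forallPn [i /negbTE nci]].
  by rewrite big1 // => i _; rewrite all_c.
by rewrite (bigD1 i) //= nci mul0r.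
Qed.

Lemma sum_first_true (R : comNzRingType) n (b : 'I_n -> bool) :
    (exists i, b i) ->
  \sum_(i < n) \prod_(k < n)
      (if (k < i)%N then (b i)%:R - (b k)%:R else (b i)%:R) = 1 :> R.
Proof.
case=> i1 b_i1; have [i0 b_i0 i0_min] := arg_minnP val b_i1.
have b_lt_i0 (k : 'I_n) : (k < i0)%N -> b k = false.
  by apply: contraTF => b_k; rewrite -leqNgt i0_min.
rewrite (bigD1 i0) //= big1 => [|k _]; last first.
  by case: ltnP => [/b_lt_i0->|_]; rewrite b_i0 ?subr0.
rewrite big1 ?addr0 // => i ne_i_i0.
case: (boolP (b i)) => [b_i | _]; last by rewrite (bigD1 i) //= ltnn mul0r.
have lt_i0_i : (i0 < i)%N.
  rewrite ltn_neqAle i0_min // andbT.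
  by apply: contra ne_i_i0 => /eqP/val_inj->.
by rewrite (bigD1 i0) //= lt_i0_i b_i0 subrr mul0r.
Qed.

Lemma eq_proj_eq (F : fieldType) k (x y : 'I_k -> F) : x =1 y -> proj_eq x y.
Proof. by move=> eq_xy; exists 1; split=> [|i]; rewrite ?oner_neq0 ?mul1r. Qed.

Lemma proj_eq_minorP (F : fieldType) k (x y : 'I_k -> F) j : y j != 0 ->
  reflect (proj_eq x y) ((x j != 0) && [forall i, y j * x i == y i * x j]).
Proof.
move=> nz_yj.
apply: (iffP andP) => [[nz_xj /forallP minor0] | [c [nz_c y_cx]]].
  exists (y j / x j); split=> [|i]; first by rewrite mulf_neq0 ?invr_eq0.
  by rewrite mulrAC (eqP (minor0 i)) mulfK.
have nz_xj : x j != 0 by apply: contra nz_yj; rewrite y_cx => /eqP->; rewrite mulr0.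
by split=> //; apply/forallP=> i; rewrite !y_cx mulrAC.
Qed.

Section Homogeneous.
Variables (R : nzRingType) (n : nat).

Lemma dhomogX1 (i : 'I_n) : ('X_i : {mpoly R[n]}) \is 1.-homog.
Proof. by rewrite dhomogX; apply/eqP; exact: mdeg1. Qed.

Lemma dhomogXn (i : 'I_n) k : ('X_i : {mpoly R[n]}) ^+ k \is k.-homog.
Proof. by have := dhomogMn k (dhomogX1 i); rewrite mul1n. Qed.

Lemma dhomog_prod_ord d k (G : 'I_k -> {mpoly R[n]}) :
  (forall i, G i \is d.-homog) -> \prod_i G i \is (d * k).-homog.
Proof.
elim: k G => [|k IHk] G homG; first by rewrite big_ord0 muln0 dhomog1.
by rewrite big_ord_recr mulnS addnC dhomogM ?IHk.
Qed.

End Homogeneous.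

Section IndicatorForms.
Variables (F : finFieldType) (n : nat).
Local Notation r := #|F|.-1.

Lemma meval_Xn (x : 'I_n -> F) i k : ('X_i ^+ k : {mpoly F[n]}).@[x] = x i ^+ k.
Proof. by rewrite rmorphXn /= mevalXU. Qed.

Definition nonzero_indicator : {mpoly F[n]} :=
  \sum_(i < n) \prod_(k < n)
    (if (k < i)%N then 'X_i ^+ r - 'X_k ^+ r else 'X_i ^+ r).

Lemma dhomog_nonzero_indicator : nonzero_indicator \is (r * n).-homog.
Proof.
apply: rpred_sum => i _; apply: dhomog_prod_ord => k.
by case: ifP => _; rewrite ?rpredB ?dhomogXn.
Qed.

Lemma meval_nonzero_indicator x : nonzero_vec x -> nonzero_indicator.@[x] = 1.
Proof.
case=> i nz_xi.
rewrite -(@sum_first_true _ _ (fun i => x i != 0)); last by exists i.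
rewrite rmorph_sum; apply: eq_bigr => {nz_xi}i _; rewrite rmorph_prod.
apply: eq_bigr => k _.
by case: ifP => _; rewrite /= ?mevalB !meval_Xn !expf_card_pred.
Qed.

Definition point_indicator (P0 : 'I_n -> F) (j : 'I_n) : {mpoly F[n]} :=
  \prod_(i < n) ('X_j ^+ r - (P0 j *: 'X_i - P0 i *: 'X_j) ^+ r).

Lemma dhomog_point_indicator P0 j : point_indicator P0 j \is (r * n).-homog.
Proof.
apply: dhomog_prod_ord => i; rewrite rpredB ?dhomogXn //.
have lin : (P0 j *: 'X_i - P0 i *: 'X_j : {mpoly F[n]}) \is 1.-homog.
  by rewrite rpredB ?dhomogZ ?dhomogX1.
by have := dhomogMn r lin; rewrite mul1n.
Qed.

Lemma meval_point_indicator P0 j x :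
  (point_indicator P0 j).@[x]
    = ((x j != 0) && [forall i, P0 j * x i == P0 i * x j])%:R.
Proof.
have -> : (point_indicator P0 j).@[x]
    = \prod_i ((x j != 0)%:R - (P0 j * x i - P0 i * x j != 0)%:R).
  rewrite /point_indicator rmorph_prod; apply: eq_bigr => i _.
  rewrite /= mevalB meval_Xn rmorphXn /= mevalB !mevalZ !mevalXU.
  by rewrite !expf_card_pred.
have [xj0 | nz_xj] /= := eqVneq (x j) 0.
  by rewrite (bigD1 j) //= subrr eqxx subrr mul0r.
rewrite -prodr_natr_bool; apply: eq_bigr => i _.
by rewrite subr_eq0; case: eqP; rewrite ?subr0 ?subrr.
Qed.

End IndicatorForms.

Theorem lemma2p5 (F : finFieldType) (n : nat) (hn : (1 <= n)%N)
    (P0 : 'I_n.+1 -> F) (P1 P2 : 'I_2 -> F)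
    (hP0 : nonzero_vec P0) (hP1 : nonzero_vec P1) (hP2 : nonzero_vec P2)
    (h12 : ~ proj_eq P1 P2) :
  exists h : 'I_2 -> {mpoly F[n.+1]},
    rat_map_P1 h /\
    forall x : 'I_n.+1 -> F, nonzero_vec x ->
      (proj_eq x P0 -> proj_eq (eval_map h x) P1) /\
      (~ proj_eq x P0 -> proj_eq (eval_map h x) P2).
Proof.
have [j nz_P0j] := hP0.
pose h i :=
  (P1 i - P2 i) *: point_indicator P0 j + P2 i *: nonzero_indicator F n.+1.
pose onP0 x := (x j != 0) && [forall i, P0 j * x i == P0 i * x j].
have eval_h x : nonzero_vec x -> forall i,
    eval_map h x i = if onP0 x then P1 i else P2 i.
  move=> nz_x i; rewrite /eval_map mevalD !mevalZ meval_nonzero_indicator //.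
  rewrite meval_point_indicator mulr1 -/(onP0 x).
  by case: (onP0 x); rewrite ?mulr1 ?subrK ?mulr0 ?add0r.
have onP0P x : reflect (proj_eq x P0) (onP0 x) := proj_eq_minorP x nz_P0j.
have on_P0 : onP0 P0 by apply/onP0P/eq_proj_eq.
exists h; split.
  split; first by exists (#|F|.-1 * n.+1)%N => i;
    rewrite rpredD ?dhomogZ ?dhomog_point_indicator ?dhomog_nonzero_indicator.
  have [i nz_P1i] := hP1; exists i; apply: contra nz_P1i => /eqP h_i0.
  by have := eval_h P0 hP0 i; rewrite on_P0 /eval_map h_i0 meval0 => <-.
move=> x nz_x; split=> x_P0; apply: eq_proj_eq => i; rewrite eval_h //.
  by rewrite (introT (onP0P x) x_P0).
by rewrite (introF (onP0P x) x_P0).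
Qed.
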